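(* Let $S(A)=(a_n)$ be an independent Stanley sequence with character $\lambda$. Let $\ell$ be the minimum adequate integer for $S(A)$, and let $k\ge \ell$. Let $c$ be an integer with $$\lambda\le c\le a_{2^k-2^\ell}-\lambda.$$ Then the set $$A_k(c,A)=\{a_i\mid 0\le i<2^k\}\cup\{c+a_i\mid 2^k\le i<2^{k+1}\}$$ is 3-free, and the Stanley sequence $S_k(c,A)=S(A_k(c,A))$ is a regular Stanley sequence with core $S(A)$.
   Context: A set of non-negative integers is 3-free if no three of its elements form an arithmetic progression. For a finite 3-free set $A=\{a_0<\cdots<a_k\}$ of non-negative integers, the Stanley sequence $S(A)=(a_n)_{n\ge0}$ is the increasing sequence with initial terms $a_0,\ldots,a_k$ in which each subsequent $a_{n+1}$ is the smallest integer greater than $a_n$ such that $\{a_0,\ldots,a_{n+1}\}$ is 3-free. Throughout, Stanley sequences are in root position ($a_0=0$). A finite set $A'$ with $S(A')=S(A)$ is a nucleating set; a minimal nucleating set is one of minimal cardinality. A Stanley sequence $(a_n)$ is independent with character $\lambda$ if for all sufficiently large $k$: $a_{2^k+i}=a_{2^k}+a_i$ for $0\le i<2^k$, and $a_{2^k}=2a_{2^k-1}-\lambda+1$. An integer $k_0$ is adequate for an independent $S(A)$ if (i) these equations hold for all $k\ge k_0$ and (ii) $a_{2^{k_0}}$ is not contained in the minimal nucleating set of $S(A)$. A Stanley sequence $(b_n)$ is regular with core $(a'_n)$ if there exist constants $\lambda,\sigma$ and an independent Stanley sequence $(a'_n)$ of character $\lambda$ such that for all large $k$ and $0\le i<2^k$: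 $b_{2^k-\sigma+i}=b_{2^k-\sigma}+a'_i$ and $b_{2^k-\sigma}=2b_{2^k-\sigma-1}-\lambda+1$ (such data are unique). *)

From mathcomp Require Import all_boot all_order all_algebra.
Set Implicit Arguments. Unset Strict Implicit. Unset Printing Implicit Defensive.

Definition three_free (s : seq nat) : Prop :=
  forall x y z, x \in s -> y \in s -> z \in s -> x < y -> y < z ->
    x + z <> 2 * y.

Definition prefix (a : nat -> nat) (n : nat) : seq nat := map a (iota 0 n).

(* [stanley A a] : the sequence a is the Stanley sequence S(A), in root
   position (a_0 = 0). *)
Definition stanley (A : seq nat) (a : nat -> nat) : Prop :=
  [/\ uniq A, three_free A, a 0 = 0,
      (forall i, i < size A -> a i = nth 0 (sort leq A) i) &
      (forall n, size A <= n.+1 ->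
         [/\ a n < a n.+1,
             three_free (prefix a n.+2) &
             forall m, a n < m -> m < a n.+1 ->
               ~ three_free (rcons (prefix a n.+1) m)])].

Definition nucleating (a : nat -> nat) (A' : seq nat) : Prop := stanley A' a.

Definition minimal_nucleating (a : nat -> nat) (A' : seq nat) : Prop :=
  nucleating a A' /\ forall B, nucleating a B -> size A' <= size B.

(* The independence equations at level k, with character lam:
   a_{2^k+i} = a_{2^k} + a_i (0 <= i < 2^k) and
   a_{2^k} = 2 a_{2^k - 1} - lam + 1  (written without subtraction). *)
Definition indep_eqs (a : nat -> nat) (lam : nat) (k : nat) : Prop :=
  (forall i, i < 2 ^ k -> a (2 ^ k + i) = a (2 ^ k) + a i) /\
  a (2 ^ k) + lam = 2 * a (2 ^ k - 1) + 1.

Definition independent (a : nat -> nat) (lam : nat) : Prop :=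
  exists K, forall k, K <= k -> indep_eqs a lam k.

Definition adequate (a : nat -> nat) (lam : nat) (k0 : nat) : Prop :=
  (forall k, k0 <= k -> indep_eqs a lam k) /\
  (forall A', minimal_nucleating a A' -> a (2 ^ k0) \notin A').

Definition min_adequate (a : nat -> nat) (lam : nat) (l : nat) : Prop :=
  adequate a lam l /\ forall k0, adequate a lam k0 -> l <= k0.

(* the index 2^k - sigma, for an integer constant sigma (meaningful for
   large k, where 2^k > sigma). *)
Definition shifted (k : nat) (sigma : int) : nat :=
  absz ((Posz (2 ^ k) - sigma)%R).

Definition regular_with_core (b a' : nat -> nat) : Prop :=
  exists (lam : nat) (sigma : int),
    independent a' lam /\
    exists K, forall k, K <= k ->
      (0 < Posz (2 ^ k) - sigma)%R /\
      (forall i, i < 2 ^ k ->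
         b (shifted k sigma + i) = b (shifted k sigma) + a' i) /\
      b (shifted k sigma) + lam = 2 * b (shifted k sigma - 1) + 1.

Definition Akc (a : nat -> nat) (k c : nat) : seq nat :=
  prefix a (2 ^ k) ++ [seq c + a i | i <- iota (2 ^ k) (2 ^ k)].

(* The Stanley sequence S_k(c, A) is given explicitly by b_i = a_i for i < 2^k
   and b_i = a_i + c 2^d on each level 2^(k+d) <= i < 2^(k+d+1).  Beyond level l,
   independence makes a self-similar: a_(2^j + i) = a_(2^j) + a_i and
   a_(2^(j+1)) = 3 a_(2^j).  Since the shift c 2^d doubles from level to level
   while lam <= c, no 3-AP of b straddles two levels, so b is 3-free.  For the
   greedy property, an integer strictly between two consecutive terms of b is
   reduced through the block structure to writing integers below a_(2^j), and
   negative integers down to - c 2^d, as 2 a_u - b_v with u, v < 2^j; the bound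
   c + lam <= a_(2^k - 2^l) is what makes the negative range reachable at the
   first level.  Regularity of b, with core a and sigma = 0, is read off the
   level formula. *)

From Pilot Require Import Defs.
From mathcomp Require Import all_boot all_order all_algebra.
From mathcomp Require Import zify.
From Stdlib Require Import Classical.
Set Implicit Arguments. Unset Strict Implicit.

Definition ap_free (f : nat -> nat) : Prop :=
  forall p q r, p < q -> q < r -> f p + f r <> 2 * f q.

Lemma exp2_gt0 j : 0 < 2 ^ j. Proof. by rewrite expn_gt0. Qed.
Lemma exp2S j : 2 ^ j.+1 = 2 ^ j + 2 ^ j. Proof. by rewrite expnS mul2n addnn. Qed.
Lemma exp2_le i j : i <= j -> 2 ^ i <= 2 ^ j. Proof. by move=> h; rewrite leq_exp2l. Qed.

Lemma mem_prefixP (f : nat -> nat) N x :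
  reflect (exists2 i, i < N & x = f i) (x \in Defs.prefix f N).
Proof.
apply: (iffP mapP) => [[i] | [i iN ->]]; last by exists i; rewrite // mem_iota.
by rewrite mem_iota add0n => /andP [_ iN] ->; exists i.
Qed.

Lemma mem_prefix (f : nat -> nat) N i : i < N -> f i \in Defs.prefix f N.
Proof. by move=> iN; apply/mem_prefixP; exists i. Qed.

Lemma prefix_three_free (f : nat -> nat) N :
  {homo f : i j / i < j} -> ap_free f -> three_free (Defs.prefix f N).
Proof.
move=> f_incr f_free x y z /mem_prefixP [p _ ->] /mem_prefixP [q _ ->]
  /mem_prefixP [r _ ->].
have f_lt := leqW_mono (leq_mono f_incr).
by rewrite !f_lt => pq qr; apply: f_free.
Qed.

Lemma sort_prefix (f : nat -> nat) N :
  {homo f : i j / i < j} -> sort leq (Defs.prefix f N) = Defs.prefix f N.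
Proof.
move=> f_incr; apply: sorted_sort; first exact: leq_trans.
rewrite sorted_map; apply: (sub_sorted _ (iota_ltn_sorted 0 N)) => i j /=.
by move/f_incr/ltnW.
Qed.

Section StanleyBasics.

Variables (A : seq nat) (a : nat -> nat).
Hypothesis S : stanley A a.

Lemma stanley_incr : {homo a : i j / i < j}.
Proof.
case: S => uA _ _ a_init a_step.
suff a_succ n : a n < a n.+1 by apply: homo_ltn; [exact: ltn_trans|].
case: (leqP (size A) n.+1) => h; first by case: (a_step n h).
rewrite (a_init n (ltn_trans (ltnSn n) h)) (a_init n.+1 h).
have A_sorted : sorted ltn (sort leq A).
  by rewrite ltn_sorted_uniq_leq sort_uniq uA sort_sorted //; apply: leq_total.
apply: (sorted_ltn_nth ltn_trans 0 A_sorted); rewrite ?inE ?size_sort //; lia.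
Qed.

Lemma stanley_free : ap_free a.
Proof.
move=> p q r pq qr; have a_lt := leqW_mono (leq_mono stanley_incr).
case: S => _ _ _ _ a_step.
have [_ F _] := a_step (r + size A) (leqW (leq_addl _ _)).
by apply: F; rewrite ?mem_prefix ?a_lt //; lia.
Qed.

Lemma stanley_cover n z : size A <= n.+1 -> a n < z -> z < a n.+1 ->
  exists p q, p < q /\ 2 * a q = z + a p.
Proof.
move=> An z_gt z_lt.
have a_le := leq_mono stanley_incr; have a_lt := leqW_mono a_le.
case: S => _ _ _ _ /(_ n An) [_ _ a_greedy].
set s := rcons (Defs.prefix a n.+1) z.
have le_z u : u \in s -> u <= z.
  rewrite mem_rcons in_cons => /orP [/eqP-> // | /mem_prefixP [i i_le ->]].
  by have := a_le i n; lia.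
have in_prefix u : u \in s -> u < z -> exists2 i, i < n.+1 & u = a i.
  by rewrite mem_rcons in_cons => /orP [/eqP-> | /mem_prefixP //]; rewrite ltnn.
apply: NNPP => no_ap; apply: (a_greedy z z_gt z_lt) => x y w sx sy sw xy yw E.
have y_lt_z : y < z := leq_trans yw (le_z w sw).
have [q _ y_eq] := in_prefix y sy y_lt_z.
have [p _ x_eq] := in_prefix x sx (ltn_trans xy y_lt_z).
case: (eqVneq w z) => [w_eq | /negPf w_neq].
  by apply: no_ap; exists p, q; split; [rewrite -a_lt |]; lia.
have w_lt_z : w < z by rewrite ltn_neqAle w_neq le_z.
have [r _ w_eq] := in_prefix w sw w_lt_z.
by apply: (@stanley_free p q r); rewrite -1?a_lt; lia.
Qed.

End StanleyBasics.

Lemma stanley_of_prefix (f : nat -> nat) N :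
  {homo f : i j / i < j} -> f 0 = 0 -> ap_free f ->
  (forall n z, N <= n.+1 -> f n < z -> z < f n.+1 ->
     exists p q, [/\ p < q, q <= n & 2 * f q = z + f p]) ->
  stanley (Defs.prefix f N) f.
Proof.
move=> f_incr f0 f_free f_greedy.
have size_pre M : size (Defs.prefix f M) = M by rewrite size_map size_iota.
split=> //.
- rewrite map_inj_in_uniq ?iota_uniq // => i j _ _.
  exact/incn_inj/leq_mono.
- exact: prefix_three_free.
- move=> i; rewrite sort_prefix // size_pre => iN.
  by rewrite (nth_map 0) ?size_iota // nth_iota.
- move=> n; rewrite size_pre => Nn; split; [exact: f_incr | exact: prefix_three_free |].
  move=> m m_gt m_lt free_m.
  have [p [q [pq qn E]]] := f_greedy n m Nn m_gt m_lt.
  have fpq := f_incr _ _ pq; have fqn : f q <= f n by rewrite (leq_mono f_incr).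
  have mem_s i : i <= n -> f i \in rcons (Defs.prefix f n.+1) m.
    by move=> i_le; rewrite mem_rcons in_cons mem_prefix ?orbT.
  by apply: (free_m (f p) (f q) m); rewrite ?mem_s ?mem_rcons ?mem_head //; lia.
Qed.

Lemma exists_minimal_nucleating A a : stanley A a -> exists A', minimal_nucleating a A'.
Proof.
move: {2}(size A) (leqnn (size A)) => n; elim: n A => [|n IH] A le_n S.
  by exists A; split=> // B _; rewrite (leq_trans le_n).
case: (classic (exists B, stanley B a /\ size B < size A)) => [[B [SB lt_B]] | no_B].
  by apply: (IH B) => //; rewrite -ltnS (leq_trans lt_B).
exists A; split=> // B SB; rewrite leqNgt; apply/negP => lt_B.
by apply: no_B; exists B.
Qed.

Lemma incr_locate (f : nat -> nat) z : {homo f : i j / i < j} -> f 0 = 0 ->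
  exists n, f n <= z < f n.+1.
Proof.
move=> f_incr f0; have f_ge n : n <= f n.
  by elim: n => [|n IH] //; apply: leq_ltn_trans IH (f_incr _ _ (ltnSn n)).
suff /(_ z.+1 (f_ge _)) : forall N, z < f N -> exists n, f n <= z < f n.+1 by [].
elim=> [|N IH]; first by rewrite f0.
by case: (ltnP z (f N)) => [/IH // | h1 h2]; exists N; rewrite h1.
Qed.

(* Adequacy bounds the minimal nucleating set by 2^l terms, so every
   non-term beyond a_{2^l - 1} was excluded greedily. *)
Lemma adequate_cover A a lam l : stanley A a -> adequate a lam l ->
  forall z, a (2 ^ l - 1) < z -> (forall i, a i <> z) ->
  exists p q, p < q /\ 2 * a q = z + a p.
Proof.
move=> S [_ a_notin] z z_gt z_notin.
have a_le := leq_mono (stanley_incr S).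
have [A' minA'] := exists_minimal_nucleating S.
have SA' := minA'.1.
have sizeA' : size A' <= 2 ^ l.
  rewrite leqNgt; apply/negP => big; move: (a_notin A' minA'); apply/negP/negPn.
  case: SA' => _ _ _ a_init _; rewrite (a_init _ big) -(mem_sort leq) mem_nth // size_sort //.
have a0 : a 0 = 0 by case: S.
have [n /andP [h1 h2]] := incr_locate z (stanley_incr S) a0.
have h3 : a n < z by rewrite ltn_neqAle h1 andbT; apply/eqP; apply: z_notin.
apply: (stanley_cover SA' _ h3 h2).
rewrite leqNgt; apply/negP => small.
have : a n.+1 <= a (2 ^ l - 1) by rewrite a_le; lia.
lia.
Qed.

(* Subtraction-free forms of w = 2 f u - g v and - r = 2 f u - g v, with u, v < N. *)
Definition ap_rep (f g : nat -> nat) (N w : nat) : Prop :=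
  exists u v, [/\ u < N, v < N & 2 * f u = w + g v].

Definition ap_rep_neg (f g : nat -> nat) (N r : nat) : Prop :=
  exists u v, [/\ u < N, v < N & 2 * f u + r = g v].

Lemma ap_rep_widen f g N N' w : N <= N' -> ap_rep f g N w -> ap_rep f g N' w.
Proof. by move=> NN' [u [v [uN vN E]]]; exists u, v; split; rewrite ?(leq_trans _ NN'). Qed.

Lemma ap_rep_neg_widen f g N N' r : N <= N' -> ap_rep_neg f g N r -> ap_rep_neg f g N' r.
Proof. by move=> NN' [u [v [uN vN E]]]; exists u, v; split; rewrite ?(leq_trans _ NN'). Qed.

Definition skc_weight (k i : nat) : nat :=
  if i < 2 ^ k then 0 else 2 ^ (trunc_log 2 i - k).

Lemma skc_weight_low k i : i < 2 ^ k -> skc_weight k i = 0.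
Proof. by rewrite /skc_weight => ->. Qed.

Lemma skc_weight_level k d i : 2 ^ (k + d) <= i < 2 ^ (k + d).+1 ->
  skc_weight k i = 2 ^ d.
Proof.
move=> /andP [h1 h2]; rewrite /skc_weight.
have h3 : 2 ^ k <= 2 ^ (k + d) by apply: exp2_le; rewrite leq_addr.
by rewrite ltnNge (leq_trans h3 h1) /= (@trunc_log_eq 2 (k + d)) ?h1 ?h2 // addKn.
Qed.

Lemma skc_weight_mono k : {homo skc_weight k : i j / i <= j}.
Proof.
move=> i j ij; rewrite /skc_weight; case: ifP => // /negbT; rewrite -leqNgt => ki.
rewrite ltnNge (leq_trans ki ij) /=; apply: exp2_le.
by rewrite leq_sub2r // leq_trunc_log.
Qed.

Lemma skc_weight_small k R i : k <= R -> i < 2 ^ R -> 2 * skc_weight k i <= 2 ^ (R - k).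
Proof.
move=> kR iR; rewrite /skc_weight; case: ifP => [//| /negbT]; rewrite -leqNgt => ki.
have i0 : 0 < i by have := exp2_gt0 k; lia.
have /andP [h1 h2] := trunc_log_bounds (isT : 1 < 2) i0.
set J := trunc_log 2 i in h1 h2 *.
have JR : J < R by rewrite -(ltn_exp2l _ _ (isT : 1 < 2)); lia.
have kJ : k <= J by rewrite -ltnS -(ltn_exp2l _ _ (isT : 1 < 2)); lia.
by rewrite -expnS; apply: exp2_le; lia.
Qed.

Section IndependentTail.

Variables (a : nat -> nat) (lam l : nat).
Hypotheses (a_incr : {homo a : i j / i < j}) (a0 : a 0 = 0) (a_free : ap_free a).
Hypothesis a_cover : forall z, a (2 ^ l - 1) < z -> (forall i, a i <> z) ->
  exists p q, p < q /\ 2 * a q = z + a p.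
Hypothesis a_indep : forall j, l <= j -> indep_eqs a lam j.

Let a_le := leq_mono a_incr.
Let a_lt := leqW_mono a_le.

Lemma a_block j i : l <= j -> i < 2 ^ j -> a (2 ^ j + i) = a (2 ^ j) + a i.
Proof. by move=> lj; case: (a_indep lj) => + _; apply. Qed.

Lemma a_char j : l <= j -> a (2 ^ j) + lam = 2 * a (2 ^ j - 1) + 1.
Proof. by move=> lj; case: (a_indep lj). Qed.

Lemma a_block_last j : l <= j -> a (2 ^ j.+1 - 1) = a (2 ^ j) + a (2 ^ j - 1).
Proof.
move=> lj; have := exp2_gt0 j; rewrite exp2S => pj.
rewrite -a_block //; first by congr a; lia.
by rewrite ltn_subrL pj.
Qed.

Lemma a_triple j : l <= j -> a (2 ^ j.+1) = 3 * a (2 ^ j).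
Proof. by move=> lj; have := a_char lj; have := a_char (leqW lj); rewrite a_block_last //; lia. Qed.

Lemma lam_le_a : lam <= a (2 ^ l - 1).
Proof.
have := a_char (leqnn l); have := exp2_gt0 l => p.
have := @a_incr (2 ^ l - 1) (2 ^ l); lia.
Qed.

Lemma a_pred_exp2_mono j j' : j' <= j -> a (2 ^ j' - 1) <= a (2 ^ j - 1).
Proof. by move=> h; rewrite a_le leq_sub2r ?exp2_le. Qed.

Lemma not_term_between n z : a n < z -> z < a n.+1 -> forall i, a i <> z.
Proof. by move=> h1 h2 i e; move: h1 h2; rewrite -e !a_lt; lia. Qed.

(* Blocks of length 2^j beyond level l are translates of the initial block. *)
Lemma notin_block j w : l <= j -> w <= a (2 ^ j - 1) ->
  (forall i, a i <> w) -> forall i, a i <> a (2 ^ j) + w.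
Proof.
move=> lj hw hn i ai; have := exp2_gt0 j => pj.
have h1 : 2 ^ j <= i by rewrite -a_le; lia.
have h2 : i <= 2 ^ j.+1 - 1 by rewrite -a_le a_block_last; lia.
have E : i = 2 ^ j + (i - 2 ^ j) by lia.
move: ai; rewrite E a_block //; last by rewrite exp2S in h2; lia.
by move=> e; apply: (hn (i - 2 ^ j)); lia.
Qed.

(* w is lifted to the non-term a_(2^(j+1)) + w beyond a_(2^l - 1); its covering
   3-AP either reaches down to level j or lies inside the block of level j + 1. *)
Lemma lifted_cover j w : l <= j -> w <= a (2 ^ l - 1) -> (forall i, a i <> w) ->
  (exists p q, [/\ p < 2 ^ l, q < 2 ^ j & 2 * (a (2 ^ j) + a q) = a (2 ^ j.+1) + w + a p])
  \/ exists p q, p < q /\ 2 * a q = w + a p.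
Proof.
move=> lj hw wn; have lJ : l <= j.+1 := leqW lj.
have := exp2_gt0 j => pj; have := exp2S j => ps; have := exp2S j.+1 => psJ.
have mlJ : a (2 ^ l - 1) <= a (2 ^ j.+1 - 1) by apply: a_pred_exp2_mono.
have hzT : a (2 ^ l - 1) < a (2 ^ j.+1) + w.
  have : a (2 ^ j.+1 - 1) < a (2 ^ j.+1) by rewrite a_lt; lia.
  lia.
have [p [q [pq E]]] := a_cover hzT (notin_block lJ (leq_trans hw mlJ) wn).
have apq := a_incr pq; have mS := a_block_last lj; have lamJ := a_char lJ.
have := lam_le_a; have := a_char lj; have := a_triple lj => M3 lamj laml.
case: (ltnP q (2 ^ j.+1)) => hq.
  left; have qj : 2 ^ j <= q.
    rewrite leqNgt; apply/negP => hq2.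
    have : a q <= a (2 ^ j - 1) by rewrite a_le; lia.
    by have := a_pred_exp2_mono lj; lia.
  have pl : p < 2 ^ l.
    rewrite -a_lt; have : a q <= a (2 ^ j.+1 - 1) by rewrite a_le; lia.
    have : a (2 ^ l - 1) < a (2 ^ l) by rewrite a_lt; have := exp2_gt0 l; lia.
    lia.
  exists p, (q - 2 ^ j); split; [done | lia |].
  by rewrite -a_block ?subnKC //; lia.
right; have [q' Eq] : exists q', q = 2 ^ j.+1 + q' by exists (q - 2 ^ j.+1); lia.
have hq2 : q <= 2 ^ j.+2 - 1 by rewrite -a_le a_block_last; lia.
move: E; rewrite Eq a_block //; last lia.
case: (ltnP p (2 ^ j.+1)) => hp E.
  have : a p <= a (2 ^ j.+1 - 1) by rewrite a_le; lia.
  have : a (2 ^ l.+1 - 1) <= a (2 ^ j.+1 - 1) by apply: a_pred_exp2_mono.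
  rewrite a_block_last //; have := a_char (leqnn l); lia.
have [p' Ep] : exists p', p = 2 ^ j.+1 + p' by exists (p - 2 ^ j.+1); lia.
move: E apq; rewrite Ep Eq !a_block //; try lia.
by move=> E apq; exists p', q'; split; [rewrite -a_lt |]; lia.
Qed.

Lemma ap_rep_neg_block j w : l <= j -> lam <= w -> w < a (2 ^ j) ->
  ap_rep_neg a a (2 ^ j.+1) (a (2 ^ j) - w).
Proof.
move=> lj lw wM; have := exp2_gt0 j => pj; have := exp2S j => ps.
case: (classic (exists i, a i = w)) => [[i Hi] | /not_ex_all_not wn].
  have iP : i < 2 ^ j by rewrite -a_lt; lia.
  exists i, (2 ^ j + i); split; [lia | lia | rewrite a_block //; lia].
case: (ltnP (a (2 ^ j - 1)) w) => hw.
  have [p [q [pq E]]] := a_cover (leq_ltn_trans (a_pred_exp2_mono lj) hw) wn.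
  have qP : q < 2 ^ j by rewrite -a_lt; have := a_incr pq; lia.
  exists q, (2 ^ j + p); split; [lia | lia | rewrite a_block //; lia].
have mM : a (2 ^ j - 1) < a (2 ^ j) by rewrite a_lt; lia.
have hz : a (2 ^ l - 1) < a (2 ^ j) + w by have := a_pred_exp2_mono lj; lia.
have [p [q [pq E]]] := a_cover hz (notin_block lj hw wn).
have apq := a_incr pq; have lm := a_char lj.
case: (ltnP q (2 ^ j)) => hq.
  have : a q <= a (2 ^ j - 1) by rewrite a_le; lia.
  lia.
have hq2 : q <= 2 ^ j.+1 - 1 by rewrite -a_le a_block_last; lia.
move: E; rewrite -(subnKC hq) a_block //; last lia.
by move=> E; exists (q - 2 ^ j), p; split; lia.
Qed.

Lemma ap_rep_pred_block j w : l <= j -> w <= a (2 ^ j - 1) -> ap_rep a a (2 ^ j.+1) w.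
Proof.
move=> lj hw; have := exp2_gt0 j => pj; have := exp2S j => ps.
case: (classic (exists i, a i = w)) => [[i Hi] | /not_ex_all_not wn].
  have : i <= 2 ^ j - 1 by rewrite -a_le; lia.
  by exists i, i; split; lia.
have mM : a (2 ^ j - 1) < a (2 ^ j) by rewrite a_lt; lia.
have hz : a (2 ^ l - 1) < a (2 ^ j) + w by have := a_pred_exp2_mono lj; lia.
have [p [q [pq E]]] := a_cover hz (notin_block lj hw wn).
have apq := a_incr pq.
have hq2 : q <= 2 ^ j.+1 - 1 by rewrite -a_le a_block_last; lia.
case: (ltnP p (2 ^ j)) => hp.
  exists q, (2 ^ j + p); split; [lia | lia | rewrite a_block //; lia].
move: E; rewrite -(subnKC hp) -(subnKC (leq_trans hp (ltnW pq))) !a_block //; try lia.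
by move=> E; exists (q - 2 ^ j), (p - 2 ^ j); split; lia.
Qed.

Lemma ap_rep_below k w : l < k -> w < a (2 ^ k) -> ap_rep a a (2 ^ k) w.
Proof.
move=> lk hwk.
case: (classic (exists i, a i = w)) => [[i Hi] | /not_ex_all_not wn].
  have : i < 2 ^ k by rewrite -a_lt; lia.
  by exists i, i; split; lia.
case: (ltnP (a (2 ^ l - 1)) w) => hw.
  have [p [q [pq E]]] := a_cover hw wn.
  have qP : q < 2 ^ k by rewrite -a_lt; have := a_incr pq; lia.
  by exists q, p; split; lia.
exact: ap_rep_widen (exp2_le lk) (ap_rep_pred_block (leqnn l) hw).
Qed.

(* Induction on k - l, splitting the last block into its two halves. *)
Lemma ap_rep_neg_below k r : l <= k -> 0 < r -> r + lam <= a (2 ^ k - 2 ^ l) ->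
  ap_rep_neg a a (2 ^ k) r.
Proof.
move=> /subnKC <-; elim: (k - l) r => [|d IH] r r0.
  by rewrite addn0 subnn a0; lia.
rewrite addnS; set j := l + d in IH *; have lj : l <= j by exact: leq_addr.
have := exp2_gt0 j => pj; have := exp2S j => ps; have lp : 2 ^ l <= 2 ^ j by apply: exp2_le.
have -> : a (2 ^ j.+1 - 2 ^ l) = a (2 ^ j) + a (2 ^ j - 2 ^ l).
  rewrite -a_block //; first by congr a; lia.
  by have := exp2_gt0 l; lia.
move=> hr; have widen := ap_rep_neg_widen (exp2_le (leqnSn j)).
case: (leqP (r + lam) (a (2 ^ j - 2 ^ l))) => h1.
  exact/widen/IH.
case: (leqP (a (2 ^ j)) r) => h2.
  case: (posnP (r - a (2 ^ j))) => h3.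
    by exists 0, (2 ^ j); rewrite a0; split; lia.
  have h5 : r - a (2 ^ j) + lam <= a (2 ^ j - 2 ^ l) by lia.
  have [u [v [hu hv E]]] := IH (r - a (2 ^ j)) h3 h5.
  exists u, (2 ^ j + v); split; [lia | lia | rewrite a_block //; lia].
case: (leqP (r + lam) (a (2 ^ j))) => h4.
  have -> : r = a (2 ^ j) - (a (2 ^ j) - r) by lia.
  by apply: ap_rep_neg_block; lia.
have lj2 : l < j.
  by rewrite ltn_neqAle lj andbT; apply/eqP => ejl; move: h4 hr; rewrite -ejl subnn a0; lia.
have h6 : a (2 ^ j) - r < a (2 ^ j) by lia.
have [u [v [hu hv E]]] := ap_rep_below lj2 h6.
exists u, (2 ^ j + v); split; [lia | lia | rewrite a_block //; lia].
Qed.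

Variables (k c : nat).
Hypothesis lk : l <= k.

Definition skc (i : nat) : nat := a i + c * skc_weight k i.

Lemma skc_low i : i < 2 ^ k -> skc i = a i.
Proof. by move=> h; rewrite /skc skc_weight_low // muln0 addn0. Qed.

Lemma skc_level d t : t < 2 ^ (k + d) ->
  skc (2 ^ (k + d) + t) = a (2 ^ (k + d)) + a t + c * 2 ^ d.
Proof.
move=> td; rewrite /skc a_block ?(leq_trans lk (leq_addr _ _)) //.
by rewrite (@skc_weight_level k d) // exp2S leq_addr /= ltn_add2l.
Qed.

Lemma skc_incr : {homo skc : i j / i < j}.
Proof.
move=> i j ij; rewrite /skc -addSn; apply: leq_add (a_incr ij) _.
by rewrite leq_mul2l skc_weight_mono ?orbT // ltnW.
Qed.

Lemma skc_core d i : i < 2 ^ (k + d).+1 ->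
  skc (2 ^ (k + d).+1 + i) = skc (2 ^ (k + d).+1) + a i.
Proof.
move=> hi; have level_J := @skc_level d.+1; rewrite addnS in level_J.
by rewrite -[2 ^ _ in RHS]addn0 !level_J ?exp2_gt0 // a0; lia.
Qed.

Lemma skc_char d : skc (2 ^ (k + d).+1) + lam = 2 * skc (2 ^ (k + d).+1 - 1) + 1.
Proof.
have lkd : l <= k + d by rewrite (leq_trans lk) ?leq_addr.
have := exp2_gt0 (k + d); have := exp2S (k + d) => ps pd.
have -> : 2 ^ (k + d).+1 - 1 = 2 ^ (k + d) + (2 ^ (k + d) - 1) by lia.
have := @skc_level d.+1 0 (exp2_gt0 _); rewrite addnS addn0 a0 => ->.
rewrite skc_level; last lia.
by have := a_char (leqW lkd); rewrite a_block_last // (expnS 2 d); lia.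
Qed.

Lemma skc_regular : regular_with_core skc a.
Proof.
exists lam, 0%R; split; first by exists l.
exists k.+1 => j kj; have [d ->] : exists d, j = (k + d).+1 by exists (j - k.+1); lia.
rewrite /shifted GRing.subr0 /=; split; first by rewrite ltz_nat exp2_gt0.
by split; [exact: skc_core | exact: skc_char].
Qed.

Lemma Akc_skc : Akc a k c = Defs.prefix skc (2 ^ k.+1).
Proof.
rewrite /Akc /Defs.prefix exp2S iotaD map_cat add0n; congr (_ ++ _).
  by apply/eq_in_map => i; rewrite mem_iota add0n => /andP [_ h]; rewrite skc_low.
apply/eq_in_map => i; rewrite mem_iota => /andP [h1 h2].
by rewrite /skc (@skc_weight_level k 0) ?addn0 ?exp2S ?h1 // muln1 addnC.
Qed.

Hypothesis lc : lam <= c.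

Lemma skc_free : ap_free skc.
Proof.
move=> p q r pq qr; have F := a_free pq qr.
case: (ltnP r (2 ^ k)) => hr.
  by rewrite !skc_low //; lia.
have r0 : 0 < r by have := exp2_gt0 k; lia.
have /andP [h1 h2] := trunc_log_bounds (isT : 1 < 2) r0.
set R := trunc_log 2 r in h1 h2.
have kR : k <= R by rewrite -ltnS -(ltn_exp2l _ _ (isT : 1 < 2)); lia.
have lR : l <= R := leq_trans lk kR.
have level_R i : 2 ^ R <= i -> i <= r -> skc_weight k i = 2 ^ (R - k).
  by move=> hi ir; apply: skc_weight_level; rewrite subnKC // hi /=; lia.
have aru : a r <= a (2 ^ R) + a (2 ^ R - 1) by rewrite -a_block_last // a_le; lia.
have arl : a (2 ^ R) <= a r by rewrite a_le.
have lamR := a_char lR.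
have := exp2_gt0 (R - k).
rewrite /skc (level_R r) //.
case: (ltnP q (2 ^ R)) => hq.
  have aqu : a q <= a (2 ^ R - 1) by rewrite a_le; lia.
  have gq := skc_weight_small kR hq.
  have gp := skc_weight_small kR (ltn_trans pq hq).
  case: (leqP (skc_weight k p + 2 ^ (R - k)) (2 * skc_weight k q)) => hh.
    have gp0 : skc_weight k p = 0 by lia.
    have gqe : 2 * skc_weight k q = 2 ^ (R - k) by lia.
    by rewrite gp0 muln0 addn0 -gqe mulnCA => _ e; apply: F; lia.
  have : c * (2 * skc_weight k q).+1 <= c * (skc_weight k p + 2 ^ (R - k)).
    by rewrite leq_mul2l hh orbT.
  by rewrite mulnS mulnDr; lia.
rewrite (level_R q) //; last exact: ltnW.
case: (ltnP p (2 ^ R)) => hp.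
  have apu : a p <= a (2 ^ R - 1) by rewrite a_le; lia.
  have gp := skc_weight_small kR hp.
  have : c * (skc_weight k p).+1 <= c * 2 ^ (R - k) by rewrite leq_mul2l; apply/orP; right; lia.
  have aql : a (2 ^ R) <= a q by rewrite a_le.
  by rewrite mulnS; lia.
by rewrite (level_R p) //; lia.
Qed.

Lemma Akc_three_free : three_free (Akc a k c).
Proof. by rewrite Akc_skc; apply: prefix_three_free; [exact: skc_incr | exact: skc_free]. Qed.

Hypothesis cS : c + lam <= a (2 ^ k - 2 ^ l).

Lemma c_mul_exp2_le d : c * 2 ^ d <= a (2 ^ (k + d)).
Proof.
elim: d => [|d IH].
  rewrite addn0 muln1; have : a (2 ^ k - 2 ^ l) <= a (2 ^ k) by rewrite a_le leq_subr.
  lia.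
by rewrite addnS a_triple ?(leq_trans lk (leq_addr _ _)) // expnS; lia.
Qed.

(* Simultaneous induction on d: a target at the new level reduces, through the
   block structure, to a target of either sign at the previous level. *)
Lemma ap_rep_skc d : l < k ->
  (forall w, w < a (2 ^ (k + d)) -> ap_rep a skc (2 ^ (k + d)) w) /\
  (forall r, 0 < r -> r <= c * 2 ^ d -> ap_rep_neg a skc (2 ^ (k + d)) r).
Proof.
move=> lk2.
elim: d => [|d [IHp IHn]].
  rewrite addn0 muln1; split.
    move=> w hw; have [u [v [hu hv E]]] := ap_rep_below lk2 hw.
    by exists u, v; rewrite skc_low.
  move=> r r0 rc; have hr : r + lam <= a (2 ^ k - 2 ^ l) by lia.
  have [u [v [hu hv E]]] := ap_rep_neg_below (ltnW lk2) r0 hr.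
  by exists u, v; rewrite skc_low.
have lj : l < k + d by rewrite (leq_trans lk2) ?leq_addr.
set j := k + d in IHp IHn lj *.
have := exp2_gt0 j => pj; have := exp2S j => ps.
have level_j := @skc_level d; rewrite -/j in level_j.
have M3 := a_triple (ltnW lj).
have c_le := c_mul_exp2_le d; rewrite -/j in c_le.
rewrite addnS -/j M3 ps (expnS 2 d); split.
  move=> w hw.
  case: (ltnP w (a (2 ^ j))) => h1.
    exact: ap_rep_widen (leq_addr _ _) (IHp w h1).
  case: (ltnP (w + c * 2 ^ d) (2 * a (2 ^ j))) => h2.
    have h3 : w - a (2 ^ j) + c * 2 ^ d < a (2 ^ j) by lia.
    have [u [v [hu hv E]]] := ap_rep_below lj h3.
    exists (2 ^ j + u), (2 ^ j + v); split; [lia | lia |].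
    by rewrite level_j // a_block ?(ltnW lj) //; lia.
  case: (leqP (2 * a (2 ^ j)) w) => h4.
    have h5 : w - 2 * a (2 ^ j) < a (2 ^ j) by lia.
    have [u [p [hu hp E]]] := IHp _ h5.
    exists (2 ^ j + u), p; split; [lia | lia |].
    by rewrite a_block ?(ltnW lj) //; lia.
  have h5 : 0 < 2 * a (2 ^ j) - w by lia.
  have h6 : 2 * a (2 ^ j) - w <= c * 2 ^ d by lia.
  have [u [p [hu hp E]]] := IHn _ h5 h6.
  exists (2 ^ j + u), p; split; [lia | lia |].
  by rewrite a_block ?(ltnW lj) //; lia.
move=> r r0 rd.
case: (leqP r (c * 2 ^ d)) => h1.
  exact: ap_rep_neg_widen (leq_addr _ _) (IHn r r0 h1).
have h3 : a (2 ^ j) - (r - c * 2 ^ d) < a (2 ^ j) by lia.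
have [u [v [hu hv E]]] := ap_rep_below lj h3.
exists u, (2 ^ j + v); split; [lia | lia |].
by rewrite level_j //; lia.
Qed.

Lemma skc_cover_gap d z : l < k ->
  skc (2 ^ (k + d).+1 - 1) < z -> z < skc (2 ^ (k + d).+1) ->
  exists p q, [/\ p < q, q < 2 ^ (k + d).+1 & 2 * skc q = z + skc p].
Proof.
move=> lk2; have lj : l < k + d by rewrite (leq_trans lk2) ?leq_addr.
have [Wp Wn] := ap_rep_skc d lk2.
set j := k + d in lj Wp Wn *.
have := exp2_gt0 j => pj; have := exp2S j => ps.
have level_j := @skc_level d; rewrite -/j in level_j.
have mM : a (2 ^ j - 1) < a (2 ^ j) by rewrite a_lt; lia.
have mlj : a (2 ^ l - 1) <= a (2 ^ j - 1) by apply: a_pred_exp2_mono; lia.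
have -> : skc (2 ^ j.+1 - 1) = a (2 ^ j) + a (2 ^ j - 1) + c * 2 ^ d.
  by rewrite ps -addnBA // level_j; lia.
have -> : skc (2 ^ j.+1) = 3 * a (2 ^ j) + 2 * (c * 2 ^ d).
  have := @skc_level d.+1 0 (exp2_gt0 _).
  rewrite addnS addn0 a0 a_triple -/j ?(expnS 2 d); last lia.
  by move=> ->; lia.
move=> hz1 hz2.
case: (ltnP z (a (2 ^ j) + c * 2 ^ d + a (2 ^ j))) => hz3.
  set w := z - (a (2 ^ j) + c * 2 ^ d).
  have w1 : a (2 ^ j - 1) < w by lia.
  have w2 : w < a (2 ^ j) by lia.
  have wn : forall i, a i <> w.
    by apply: (@not_term_between (2 ^ j - 1) w w1); rewrite subn1 prednK.
  have [p [q [pq E]]] := a_cover (leq_ltn_trans mlj w1) wn.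
  have qj : q < 2 ^ j by rewrite -a_lt; have := a_incr pq; lia.
  exists (2 ^ j + p), (2 ^ j + q); split; [lia | lia |].
  by rewrite !level_j; lia.
case: (leqP (c * 2 ^ d) (z - (a (2 ^ j) + c * 2 ^ d + a (2 ^ j)))) => hs.
  have hw : z - (a (2 ^ j) + c * 2 ^ d + a (2 ^ j)) - c * 2 ^ d < a (2 ^ j) by lia.
  have [u [p [hu hp E]]] := Wp _ hw.
  exists p, (2 ^ j + u); split; [lia | lia |].
  by rewrite level_j //; lia.
have hr0 : 0 < c * 2 ^ d - (z - (a (2 ^ j) + c * 2 ^ d + a (2 ^ j))) by lia.
have hr1 : c * 2 ^ d - (z - (a (2 ^ j) + c * 2 ^ d + a (2 ^ j))) <= c * 2 ^ d by lia.
have [u [p [hu hp E]]] := Wn _ hr0 hr1.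
exists p, (2 ^ j + u); split; [lia | lia |].
by rewrite level_j //; lia.
Qed.

Lemma skc_cover_inner d s z : l < k -> s.+1 < 2 ^ (k + d).+1 ->
  skc (2 ^ (k + d).+1 + s) < z -> z < skc (2 ^ (k + d).+1 + s.+1) ->
  exists p q, [/\ p < q, q <= 2 ^ (k + d).+1 + s & 2 * skc q = z + skc p].
Proof.
move=> lk2 hs; have lj : l < k + d by rewrite (leq_trans lk2) ?leq_addr.
have level_J := @skc_level d.+1; rewrite addnS (expnS 2 d) in level_J.
have level_j := @skc_level d.
set j := k + d in lj hs level_j level_J *.
have := exp2_gt0 j => pj; have := exp2S j => ps; have := exp2_le (ltnW lj) => lp.
rewrite !level_J //; last exact: ltnW.
move=> hz1 hz2; set w := z - (a (2 ^ j.+1) + c * (2 * 2 ^ d)).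
have w1 : a s < w by lia.
have w2 : w < a s.+1 by lia.
have wn := not_term_between w1 w2.
have [[p [q [pl hq E]]] | [p [q [pq E]]]] :
    (exists p q, [/\ p < 2 ^ l, q < 2 ^ j & 2 * (a (2 ^ j) + a q) = a (2 ^ j.+1) + w + a p])
    \/ exists p q, p < q /\ 2 * a q = w + a p.
- case: (ltnP (a (2 ^ l - 1)) w) => hw; first by right; exact: a_cover.
  exact: lifted_cover (ltnW lj) hw wn.
- exists p, (2 ^ j + q); split; [lia | lia |].
  have pk : p < 2 ^ k by have := exp2_le lk; lia.
  by rewrite [skc p]skc_low // level_j //; lia.
have qs : q < s.+1 by rewrite -a_lt; have := a_incr pq; lia.
exists (2 ^ j.+1 + p), (2 ^ j.+1 + q); split; [lia | lia |].
by rewrite !level_J; lia.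
Qed.

Lemma skc_cover n z : 2 ^ k.+1 <= n.+1 -> skc n < z -> z < skc n.+1 ->
  exists p q, [/\ p < q, q <= n & 2 * skc q = z + skc p].
Proof.
move=> nk hz1 hz2.
have hml : a (2 ^ l - 1) <= a n by rewrite a_le; have := exp2_le lk; have := exp2S k; lia.
case: (posnP c) => c0.
  have skcE i : skc i = a i by rewrite /skc c0 mul0n addn0.
  rewrite !skcE in hz1 hz2 *.
  have [p [q [pq E]]] := a_cover (leq_ltn_trans hml hz1) (not_term_between hz1 hz2).
  have qn : q < n.+1 by rewrite -a_lt; have := a_incr pq; lia.
  by exists p, q; rewrite !skcE.
have lk2 : l < k.
  rewrite ltn_neqAle lk andbT; apply/eqP => e; move: cS; rewrite e subnn a0; lia.
have /andP [h1 h2] := trunc_log_bounds (isT : 1 < 2) (ltn0Sn n).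
have kJ : k < trunc_log 2 n.+1 by apply: trunc_log_max.
have [d eJ] : exists d, trunc_log 2 n.+1 = (k + d).+1.
  by exists (trunc_log 2 n.+1 - k).-1; lia.
rewrite eJ in h1 h2.
case: (eqVneq n.+1 (2 ^ (k + d).+1)) => en.
  have En : n = 2 ^ (k + d).+1 - 1 by lia.
  move: hz1 hz2; rewrite en En => hz1 hz2.
  have [p [q [pq qn E]]] := skc_cover_gap lk2 hz1 hz2.
  by exists p, q; split; rewrite // -ltnS subn1 prednK ?exp2_gt0.
have En : n = 2 ^ (k + d).+1 + (n - 2 ^ (k + d).+1) by lia.
have En1 : n.+1 = 2 ^ (k + d).+1 + (n - 2 ^ (k + d).+1).+1 by lia.
have hs : (n - 2 ^ (k + d).+1).+1 < 2 ^ (k + d).+1 by have := exp2S (k + d).+1; lia.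
move: hz1 hz2; rewrite En1 {1}En => hz1 hz2.
by rewrite En; apply: skc_cover_inner lk2 hs hz1 hz2.
Qed.

Lemma skc_stanley : stanley (Akc a k c) skc.
Proof.
rewrite Akc_skc; apply: stanley_of_prefix; [exact: skc_incr | | exact: skc_free |].
  by rewrite skc_low ?exp2_gt0.
exact: skc_cover.
Qed.

End IndependentTail.

Theorem theorem4 (A : seq nat) (a : nat -> nat) (lam l k c : nat) :
  stanley A a ->
  independent a lam ->
  min_adequate a lam l ->
  l <= k ->
  lam <= c -> c + lam <= a (2 ^ k - 2 ^ l) ->
  three_free (Akc a k c) /\
  exists b : nat -> nat, stanley (Akc a k c) b /\ regular_with_core b a.
Proof.
move=> S _ [ad _] lk lc cS.
have a_incr := stanley_incr S; have a_free := stanley_free S.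
have a0 : a 0 = 0 by case: S.
have a_cover := adequate_cover S ad; have a_indep := ad.1.
split; first exact (Akc_three_free a_incr a0 a_free a_indep lk lc).
exists (skc a k c); split.
  exact (skc_stanley a_incr a0 a_free a_cover a_indep lk lc cS).
exact (skc_regular a0 a_indep c lk).
Qed.
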